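(* Let $\mathcal X,\mathcal Y$ be nonempty convex compact sets and $\mathcal L:\mathcal X\times\mathcal Y\to\mathbb R$ a differentiable, uniformly strongly convex-concave function with saddle point $(x^*,y^* )$ and finite curvature constant $C_{\mathcal L}$ and finite $M_{\mathcal L}$. Let $z^{(t)}$ be a current iterate and, for a direction $d^{(t)}$ and step $\gamma$, let $w_\gamma:=w(z^{(t)}+\gamma d^{(t)})$ and $w_t:=w(z^{(t)})$. (I) If $(x^*,y^* )$ lies in the relative interior of $\mathcal X\times\mathcal Y$, $\mu^{int}_{\mathcal L}>0$, and $d^{(t)}=d^{(t)}_{FW}$ is the FW direction, then for any $\gamma\in[0,1]$, $$w_\gamma\le w_t-\nu^{FW}\gamma g_t^{FW}+\gamma^2C_{\mathcal L},\qquad\nu^{FW}:=1-\frac{M_{\mathcal L}}{\sqrt{\mu^{int}_{\mathcal L}}}.$$ (P) If $\mathcal X=\mathrm{conv}(\mathcal A)$, $\mathcal Y=\mathrm{conv}(\mathcal B)$ with $\mathcal A,\mathcal B$ finite, $\mu^A_{\mathcal L}>0$, and $d^{(t)}$ is the direction chosen by a step of SP-AFW at $z^{(t)}$, then for any $\gamma\in[0,\gamma_{\max}]$, $$w_\gamma\le w_t-\nu^{PFW}\gamma g_t^{PFW}+\gamma^2C_{\mathcal L},\qquad\nu^{PFW}:=\frac12-\frac{M_{\mathcal L}}{\sqrt{\mu^A_{\mathcal L}}}.$$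
   Context: Convex-concave: $\mathcal L(\cdot,y)$ convex, $\mathcal L(x,\cdot)$ concave. Uniformly strongly convex-concave: there are $\mu_{\mathcal X},\mu_{\mathcal Y}>0$ with $\mathcal L(\cdot,y)$ $\mu_{\mathcal X}$-strongly convex for every $y$ and $-\mathcal L(x,\cdot)$ $\mu_{\mathcal Y}$-strongly convex for every $x$. Saddle point: $\mathcal L(x^*,y)\le\mathcal L(x^*,y^* )\le\mathcal L(x,y^* )$ for all $x,y$; $\mathcal L^*:=\mathcal L(x^*,y^* )$. For $z=(x,y)$: $r(z):=(\nabla_x\mathcal L(z),-\nabla_y\mathcal L(z))$, $w(z):=\mathcal L(x,y^* )-\mathcal L(x^*,y)$. With $r^{(t)}:=r(z^{(t)})$, $s^{(t)}\in\arg\min_{s\in\mathcal X\times\mathcal Y}\langle s,r^{(t)}\rangle$, $d^{(t)}_{FW}:=s^{(t)}-z^{(t)}$, $g_t^{FW}:=\langle-r^{(t)},d_{FW}^{(t)}\rangle$. SP-AFW step at $z^{(t)}$: $z^{(t)}$ is given with active sets $S_x^{(t)}\subseteq\mathcal A$, $S_y^{(t)}\subseteq\mathcal B$ and positive weights $\alpha$ summing to one on each, $x^{(t)}=\sum_{v\in S_x^{(t)}}\alpha_vv$, $y^{(t)}=\sum_{v\in S_y^{(t)}}\alpha_vv$. Let $v^{(t)}=(v_x^{(t)},v_y^{(t)})\in\arg\max_{v\in S_x^{(t)}\times S_y^{(t)}}\langle r^{(t)},v\rangle$, $d^{(t)}_A:=z^{(t)}-v^{(t)}$; if $\langle-r^{(t)},d^{(t)}_{FW}\rangle\ge\langle-r^{(t)},d^{(t)}_A\rangle$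 then $d^{(t)}:=d^{(t)}_{FW}$, $\gamma_{\max}:=1$; else $d^{(t)}:=d^{(t)}_A$, $\gamma_{\max}:=\min\{\frac{\alpha_{v_x^{(t)}}}{1-\alpha_{v_x^{(t)}}},\frac{\alpha_{v_y^{(t)}}}{1-\alpha_{v_y^{(t)}}}\}$. $g_t^{PFW}:=\langle-r^{(t)},d^{(t)}_{FW}+d^{(t)}_A\rangle$. Constants. $\mathcal F:=\{\mathcal L(\cdot,y):y\in\mathcal Y\}$, $\mathcal G:=\{-\mathcal L(x,\cdot):x\in\mathcal X\}$. Curvature: $C_f:=\sup\frac2{\gamma^2}(f(x+\gamma(s-v))-f(x)-\gamma\langle s-v,\nabla f(x)\rangle)$ over $x,s,v$ in the domain, $\gamma>0$ with $x+\gamma(s-v)$ in the domain; $C_{\mathcal L}:=\frac12(\sup_{f\in\mathcal F}C_f+\sup_{g\in\mathcal G}C_g)$. Interior strong convexity of $f$ on $\mathcal K$ w.r.t. $x_c$ in its relative interior: $\mu_f^{x_c}:=\inf\frac2{\gamma^2}(f(u)-f(x)-\langle u-x,\nabla f(x)\rangle)$ over $x\in\mathcal K\setminus\{x_c\}$, $\gamma\in(0,1]$, $u=x+\gamma(s-x)$ where $s$ is where the ray from $x$ through $x_c$ meets the relative boundary of $\mathcal K$; $\mu^{int}_{\mathcal L}:=\min\{\inf_{f\in\mathcal F}\mu_f^{x^*},\inf_{g\in\mathcal G}\mu_g^{y^*}\}$. Geometric strong convexity of $f$ on $\mathcal K=\mathrm{conv}(\mathcal A)$: for $x\in\mathcal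 K$, $\mathcal S_x$ = family of $S\subseteq\mathcal A$ such that $x$ is a convex combination of all elements of $S$ with positive coefficients, $v_S(x)\in\arg\max_{v\in S}\langle\nabla f(x),v\rangle$, $v_f(x)\in\arg\min\{\langle\nabla f(x),v\rangle:v=v_S(x),S\in\mathcal S_x\}$, $s_f(x)\in\arg\min_{v\in\mathcal A}\langle\nabla f(x),v\rangle$, $\gamma^A(x,x'):=\frac{\langle-\nabla f(x),x'-x\rangle}{\langle-\nabla f(x),s_f(x)-v_f(x)\rangle}$, $\mu^A_f:=\inf_{x\in\mathcal K}\inf_{x':\langle\nabla f(x),x'-x\rangle<0}\frac2{\gamma^A(x,x')^2}(f(x')-f(x)-\langle x'-x,\nabla f(x)\rangle)$; $\mu^A_{\mathcal L}:=\min\{\inf_{f\in\mathcal F}\mu^A_f\text{ (over }\mathcal A),\inf_{g\in\mathcal G}\mu^A_g\text{ (over }\mathcal B)\}$. Bilinearity: $M_{XY}:=\sup\langle s-v,\frac{\nabla_x\mathcal L(x,y^* )-\nabla_x\mathcal L(x,y)}{\sqrt{\mathcal L^*-\mathcal L(x^*,y)}}\rangle$ over $y\ne y^*$, $x,s,v\in\mathcal X$; $M_{YX}:=\sup\langle s-v,\frac{\nabla_y\mathcal L(x,y)-\nabla_y\mathcal L(x^*,y)}{\sqrt{\mathcal L(x,y^* )-\mathcal L^*}}\rangle$ over $x\ne x^*$, $y,s,v\in\mathcal Y$; $M_{\mathcal L}:=\max\{M_{XY},M_{YX}\}$. *)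

From HB Require Import structures.
From mathcomp Require Import all_boot all_order all_algebra.
From mathcomp Require Import all_classical all_reals all_analysis.
Set Implicit Arguments. Unset Strict Implicit. Unset Printing Implicit Defensive.
Import Order.TTheory GRing.Theory Num.Theory.
Import numFieldNormedType.Exports.
Local Open Scope classical_set_scope.
Local Open Scope ring_scope.

Section SPDefs.
Context {R : realType}.

Definition dotv {n : nat} (u v : 'rV[R]_n) : R := \sum_(i < n) u 0 i * v 0 i.

Definition convex_setR {n : nat} (K : set 'rV[R]_n) : Prop :=
  forall x y (t : R), K x -> K y -> 0 <= t <= 1 -> K (t *: x + (1 - t) *: y).

Definition strongly_convex_on {n : nat} (K : set 'rV[R]_n) (mu : R)
  (f : 'rV[R]_n -> R) : Prop :=
  forall x y (t : R), K x -> K y -> 0 <= t <= 1 ->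
    f (t *: x + (1 - t) *: y) <=
      t * f x + (1 - t) * f y - mu / 2 * t * (1 - t) * dotv (x - y) (x - y).

Definition Lpair {n m : nat} (L : 'rV[R]_n -> 'rV[R]_m -> R) :
  'rV[R]_n * 'rV[R]_m -> R := fun p => L p.1 p.2.

Definition gradx {n m : nat} (L : 'rV[R]_n -> 'rV[R]_m -> R) x y : 'rV[R]_n :=
  \row_(i < n) ('d (Lpair L) (x, y) (delta_mx 0 i, 0)).
Definition grady {n m : nat} (L : 'rV[R]_n -> 'rV[R]_m -> R) x y : 'rV[R]_m :=
  \row_(i < m) ('d (Lpair L) (x, y) (0, delta_mx 0 i)).

Definition unif_strongly_convex_concave {n m : nat} (X : set 'rV[R]_n)
  (Y : set 'rV[R]_m) (L : 'rV[R]_n -> 'rV[R]_m -> R) : Prop :=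
  exists muX muY : R, 0 < muX /\ 0 < muY /\
    (forall y, Y y -> strongly_convex_on X muX (fun x => L x y)) /\
    (forall x, X x -> strongly_convex_on Y muY (fun y => - L x y)).

Definition saddle_point {n m : nat} (X : set 'rV[R]_n) (Y : set 'rV[R]_m)
  (L : 'rV[R]_n -> 'rV[R]_m -> R) xs ys : Prop :=
  X xs /\ Y ys /\ forall x y, X x -> Y y -> L xs y <= L xs ys <= L x ys.

Definition wgap {n m : nat} (L : 'rV[R]_n -> 'rV[R]_m -> R) xs ys x y : R :=
  L x ys - L xs y.

Definition conv_hull {n : nat} (A : seq 'rV[R]_n) : set 'rV[R]_n :=
  [set x | exists a : 'rV[R]_n -> R, (forall v, v \in A -> 0 <= a v) /\
     \sum_(v <- undup A) a v = 1 /\ x = \sum_(v <- undup A) a v *: v].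

Definition pos_comb {n : nat} (A S : seq 'rV[R]_n) (x : 'rV[R]_n) : Prop :=
  uniq S /\ {subset S <= A} /\
  exists a : 'rV[R]_n -> R, (forall v, v \in S -> 0 < a v) /\
     \sum_(v <- S) a v = 1 /\ x = \sum_(v <- S) a v *: v.

Definition aff_hull {V : lmodType R} (K : set V) : set V :=
  [set z | exists (k : nat) (p : 'I_k -> V) (a : 'I_k -> R),
     (forall i, K (p i)) /\ \sum_(i < k) a i = 1 /\ z = \sum_(i < k) a i *: p i].

Definition relint {V : lmodType R} (sqn : V -> R) (K : set V) : set V :=
  [set x | K x /\ exists e : R, 0 < e /\
     forall z, aff_hull K z -> sqn (z - x) < e -> K z].

Definition sqnv {n : nat} (u : 'rV[R]_n) : R := dotv u u.
Definition sqnp {n m : nat} (p : 'rV[R]_n * 'rV[R]_m) : R := dotv p.1 p.1 + dotv p.2 p.2.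

Definition relbd {n : nat} (K : set 'rV[R]_n) : set 'rV[R]_n :=
  [set x | closure K x /\ ~ relint sqnv K x].

(* ---- the quantities C_f, mu_f^{xc}, mu_f^A for a function f with gradient gf
   on K; each returns the set of values whose sup/inf defines the constant *)
Definition curv_vals {n : nat} (K : set 'rV[R]_n) (f : 'rV[R]_n -> R)
  (gf : 'rV[R]_n -> 'rV[R]_n) : set R :=
  [set r | exists x s v (g : R), K x /\ K s /\ K v /\ 0 < g /\
     K (x + g *: (s - v)) /\
     r = 2 / g ^+ 2 * (f (x + g *: (s - v)) - f x - g * dotv (s - v) (gf x))].

Definition muint_vals {n : nat} (K : set 'rV[R]_n) (xc : 'rV[R]_n)
  (f : 'rV[R]_n -> R) (gf : 'rV[R]_n -> 'rV[R]_n) : set R :=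
  [set r | exists x (g : R) s (lam : R), K x /\ x <> xc /\ 0 < g <= 1 /\
     1 <= lam /\ s = x + lam *: (xc - x) /\ relbd K s /\
     r = 2 / g ^+ 2 * (f (x + g *: (s - x)) - f x
                        - dotv (x + g *: (s - x) - x) (gf x))].

Definition is_vS {n : nat} (g : 'rV[R]_n) (S : seq 'rV[R]_n) v : Prop :=
  v \in S /\ forall u, u \in S -> dotv g u <= dotv g v.

Definition is_vf {n : nat} (A : seq 'rV[R]_n) (g x : 'rV[R]_n) v : Prop :=
  (exists S, pos_comb A S x /\ is_vS g S v) /\
  forall S v', pos_comb A S x -> is_vS g S v' -> dotv g v <= dotv g v'.

Definition is_sf {n : nat} (A : seq 'rV[R]_n) (g : 'rV[R]_n) s : Prop :=
  s \in A /\ forall u, u \in A -> dotv g s <= dotv g u.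

Definition gammaA {n : nat} (g x x' s v : 'rV[R]_n) : R :=
  dotv (- g) (x' - x) / dotv (- g) (s - v).

Definition muA_vals {n : nat} (K : set 'rV[R]_n) (A : seq 'rV[R]_n)
  (f : 'rV[R]_n -> R) (gf : 'rV[R]_n -> 'rV[R]_n) : set R :=
  [set r | exists x x' s v, K x /\ K x' /\ dotv (gf x) (x' - x) < 0 /\
     is_sf A (gf x) s /\ is_vf A (gf x) x v /\
     r = 2 / (gammaA (gf x) x x' s v) ^+ 2 *
           (f x' - f x - dotv (x' - x) (gf x))].

Local Open Scope ereal_scope.

Definition CL_e {n m : nat} (X : set 'rV[R]_n) (Y : set 'rV[R]_m)
  (L : 'rV[R]_n -> 'rV[R]_m -> R) : \bar R :=
  (ereal_sup [set r%:E | r in \bigcup_(y in Y)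
                 curv_vals X (fun x => L x y) (fun x => gradx L x y)] +
   ereal_sup [set r%:E | r in \bigcup_(x in X)
                 curv_vals Y (fun y => - L x y)%R (fun y => - grady L x y)%R])
  * (2^-1)%:E.

Definition muint_e {n m : nat} (X : set 'rV[R]_n) (Y : set 'rV[R]_m)
  (L : 'rV[R]_n -> 'rV[R]_m -> R) xs ys : \bar R :=
  mine (ereal_inf [set r%:E | r in \bigcup_(y in Y)
          muint_vals X xs (fun x => L x y) (fun x => gradx L x y)])
       (ereal_inf [set r%:E | r in \bigcup_(x in X)
          muint_vals Y ys (fun y => - L x y)%R (fun y => - grady L x y)%R]).

Definition muA_e {n m : nat} (X : set 'rV[R]_n) (Y : set 'rV[R]_m)
  (L : 'rV[R]_n -> 'rV[R]_m -> R) (A : seq 'rV[R]_n) (B : seq 'rV[R]_m) : \bar R :=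
  mine (ereal_inf [set r%:E | r in \bigcup_(y in Y)
          muA_vals X A (fun x => L x y) (fun x => gradx L x y)])
       (ereal_inf [set r%:E | r in \bigcup_(x in X)
          muA_vals Y B (fun y => - L x y)%R (fun y => - grady L x y)%R]).

Definition ML_e {n m : nat} (X : set 'rV[R]_n) (Y : set 'rV[R]_m)
  (L : 'rV[R]_n -> 'rV[R]_m -> R) xs ys : \bar R :=
  maxe
    (ereal_sup [set r%:E | r in [set r : R | exists y x s v, Y y /\ y <> ys /\
        X x /\ X s /\ X v /\
        (r = dotv (s - v) ((Num.sqrt (L xs ys - L xs y))^-1 *:
                          (gradx L x ys - gradx L x y)))%R]])
    (ereal_sup [set r%:E | r in [set r : R | exists x y s v, X x /\ x <> xs /\
        Y y /\ Y s /\ Y v /\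
        (r = dotv (s - v) ((Num.sqrt (L x ys - L xs ys))^-1 *:
                          (grady L x y - grady L xs y)))%R]]).

Local Close Scope ereal_scope.

Definition inv_sqrt_e (mu : \bar R) : R :=
  match mu with EFin r => (Num.sqrt r)^-1 | _ => 0 end.

Definition nu_const (c M : R) (mu : \bar R) : R := c - M * inv_sqrt_e mu.

(* ---- FW / SP-AFW quantities; r(z) = (grad_x L, - grad_y L) *)
Definition neg_r_dot {n m : nat} (L : 'rV[R]_n -> 'rV[R]_m -> R) xt yt
  (dx : 'rV[R]_n) (dy : 'rV[R]_m) : R :=
  - dotv (gradx L xt yt) dx + dotv (grady L xt yt) dy.

Definition FW_atom {n m : nat} (X : set 'rV[R]_n) (Y : set 'rV[R]_m)
  (L : 'rV[R]_n -> 'rV[R]_m -> R) xt yt sx sy : Prop :=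
  X sx /\ Y sy /\ forall s1 s2, X s1 -> Y s2 ->
    dotv sx (gradx L xt yt) + dotv sy (- grady L xt yt) <=
    dotv s1 (gradx L xt yt) + dotv s2 (- grady L xt yt).

Definition active_set {n : nat} (A : seq 'rV[R]_n) (S : seq 'rV[R]_n)
  (al : 'rV[R]_n -> R) (x : 'rV[R]_n) : Prop :=
  uniq S /\ {subset S <= A} /\ (forall v, v \in S -> 0 < al v) /\
  \sum_(v <- S) al v = 1 /\ x = \sum_(v <- S) al v *: v.

Definition away_atom {n m : nat} (L : 'rV[R]_n -> 'rV[R]_m -> R) xt yt
  (Sx : seq 'rV[R]_n) (Sy : seq 'rV[R]_m) vx vy : Prop :=
  vx \in Sx /\ vy \in Sy /\ forall u1 u2, u1 \in Sx -> u2 \in Sy ->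
    dotv u1 (gradx L xt yt) + dotv u2 (- grady L xt yt) <=
    dotv vx (gradx L xt yt) + dotv vy (- grady L xt yt).

Definition away_ratio (a : R) : \bar R :=
  if a == 1 then +oo%E else (a / (1 - a))%:E.

End SPDefs.

From HB Require Import structures.
From mathcomp Require Import all_boot all_order all_algebra.
From mathcomp Require Import all_classical all_reals all_analysis.
From mathcomp Require Import ring lra.
Import Order.TTheory GRing.Theory Num.Theory.
Import numFieldNormedType.Exports.
Local Open Scope classical_set_scope.
Local Open Scope ring_scope.
Set Implicit Arguments. Unset Strict Implicit. Unset Printing Implicit Defensive.

(* The curvature constant bounds the increase of each half of
   w = L(., y* ) - L(x*, .) along the step by its first-order term plus a
   gamma^2 curvature term.  These first-order terms use the gradients at
   (x_t, y* ) and (x*, y_t) instead of at z_t, and M_L bounds the difference by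
   gamma M (sqrt h_x + sqrt h_y), where h_x = L(x_t, y* ) - L* and
   h_y = L* - L(x*, y_t) sum to w_t.  Strong convexity along the ray from x_t
   through x* (interior case) or along the pairwise FW direction (polytope
   case) gives 2 mu (L(x_t, y_t) - L(x*, y_t)) <= g_x^2, and similarly in y;
   as these two gaps also sum to w_t, sqrt mu (sqrt h_x + sqrt h_y) is at most
   the FW (resp. pairwise FW) gap.  Finally, the direction chosen by SP-AFW
   captures at least half of the pairwise FW gap. *)

Section InnerProduct.
Context {R : realType} {n : nat}.
Implicit Types (u v w : 'rV[R]_n) (a : R).

Lemma dotvC u v : dotv u v = dotv v u.
Proof. by apply: eq_bigr => i _; rewrite mulrC. Qed.

Lemma dotvDl u w v : dotv (u + w) v = dotv u v + dotv w v.
Proof. by rewrite /dotv -big_split; apply: eq_bigr => i _; rewrite mxE mulrDl. Qed.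

Lemma dotvZl a u v : dotv (a *: u) v = a * dotv u v.
Proof. by rewrite /dotv mulr_sumr; apply: eq_bigr => i _; rewrite mxE mulrA. Qed.

Lemma dotvNl u v : dotv (- u) v = - dotv u v.
Proof. by rewrite -scaleN1r dotvZl mulN1r. Qed.

Lemma dotvBl u w v : dotv (u - w) v = dotv u v - dotv w v.
Proof. by rewrite dotvDl dotvNl. Qed.

Lemma dotvDr u w v : dotv v (u + w) = dotv v u + dotv v w.
Proof. by rewrite dotvC dotvDl !(dotvC v). Qed.

Lemma dotvZr a u v : dotv v (a *: u) = a * dotv v u.
Proof. by rewrite dotvC dotvZl dotvC. Qed.

Lemma dotvNr u v : dotv v (- u) = - dotv v u.
Proof. by rewrite dotvC dotvNl dotvC. Qed.

Lemma dotvBr u w v : dotv v (u - w) = dotv v u - dotv v w.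
Proof. by rewrite dotvDr dotvNr. Qed.

Lemma dotv0l v : dotv 0 v = 0.
Proof. by rewrite /dotv big1 // => i _; rewrite mxE mul0r. Qed.

Lemma dotv_suml (T : Type) (s : seq T) (F : T -> 'rV[R]_n) v :
  dotv (\sum_(x <- s) F x) v = \sum_(x <- s) dotv (F x) v.
Proof. exact: (big_morph (dotv^~ v) (fun u w => dotvDl u w v) (dotv0l v)). Qed.

Lemma dotv_ge0 u : 0 <= dotv u u.
Proof. by apply: sumr_ge0 => i _; rewrite -expr2 sqr_ge0. Qed.

Lemma dotv_gt0 u : u != 0 -> 0 < dotv u u.
Proof.
move=> u0; rewrite lt_def dotv_ge0 andbT; apply: contra u0.
rewrite psumr_eq0 => [/allP u0|i _]; last by rewrite -expr2 sqr_ge0.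
apply/eqP/rowP => i; have := u0 i (mem_index_enum i).
by rewrite /= mulf_eq0 orbb => /eqP ->; rewrite mxE.
Qed.

End InnerProduct.

Section ConvexCombinations.
Context {R : realType} {n : nat}.
Implicit Types (K : set 'rV[R]_n) (A S : seq 'rV[R]_n).

Lemma convex_comb_step (V : lmodType R) (t : R) (a b : V) :
  t *: a + (1 - t) *: b = b + t *: (a - b).
Proof. by rewrite scalerBl scale1r scalerBr addrCA. Qed.

Lemma convex_setR_step K x s (g : R) : convex_setR K -> K x -> K s ->
  0 <= g <= 1 -> K (x + g *: (s - x)).
Proof.
by move=> cK Kx Ks g01; rewrite -convex_comb_step; apply: cK.
Qed.

Lemma convex_setR_sum K S (b : 'rV[R]_n -> R) :
  convex_setR K -> (forall v, v \in S -> K v) -> (forall v, v \in S -> 0 <= b v) ->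
  \sum_(v <- S) b v = 1 -> K (\sum_(v <- S) b v *: v).
Proof.
move=> cK; elim: S b => [|u S IH] b KS b0.
  by rewrite big_nil => /esym/eqP; rewrite oner_eq0.
rewrite !big_cons => b1.
have KSu : K u by apply: KS; exact: mem_head.
have bS0 v : v \in S -> 0 <= b v by move=> vS; apply: b0; rewrite inE vS orbT.
set r := \sum_(v <- S) b v in b1.
have r0 : 0 <= r by rewrite /r big_seq; apply: sumr_ge0.
have [rz|rnz] := eqVneq r 0.
  have bz v : v \in S -> b v = 0.
    move=> vS; move: rz => /eqP; rewrite /r big_seq psumr_eq0 // => /allP/(_ v vS).
    by rewrite vS => /eqP.
  rewrite big_seq big1 => [|v vS]; last by rewrite bz // scale0r.
  by move: b1; rewrite rz addr0 => ->; rewrite scale1r addr0.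
have rp : 0 < r by rewrite lt_def rnz r0.
have KS' : K (\sum_(v <- S) (b v / r) *: v).
  apply: IH => [v vS|v vS|]; first by apply: KS; rewrite inE vS orbT.
    by apply: divr_ge0 => //; apply: bS0.
  by rewrite -mulr_suml mulfV.
have -> : \sum_(v <- S) b v *: v = r *: \sum_(v <- S) (b v / r) *: v.
  by rewrite scaler_sumr; apply: eq_bigr => v _; rewrite scalerA mulrCA mulfV ?mulr1.
have bu0 : 0 <= b u by apply: b0; exact: mem_head.
have ru : 1 - b u = r by lra.
by have := cK _ _ (b u) KSu KS'; rewrite ru; apply; apply/andP; split; lra.
Qed.

Lemma conv_hull_mem A v : v \in A -> conv_hull A v.
Proof.
move=> vA; have vA' : v \in undup A by rewrite mem_undup.
exists (fun u => (u == v)%:R); split => [u _|]; first by rewrite ler0n.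
split; first by rewrite (bigD1_seq v) ?undup_uniq //= eqxx big1 ?addr0 // => u /negbTE ->.
rewrite (bigD1_seq v) ?undup_uniq //= eqxx scale1r big1 ?addr0 // => u /negbTE ->.
by rewrite scale0r.
Qed.

Lemma active_set_mem K A S al x : convex_setR K -> (forall v, v \in A -> K v) ->
  active_set A S al x -> K x.
Proof.
move=> cK AK [_ [SA [al0 [al1 ->]]]]; apply: convex_setR_sum => // [v vS|v vS].
  exact/AK/SA.
exact/ltW/al0.
Qed.

Lemma active_set_dotv_le A S al x v g :
  active_set A S al x -> (forall u, u \in S -> dotv u g <= dotv v g) ->
  dotv x g <= dotv v g.
Proof.
move=> [_ [_ [al0 [al1 ->]]]] vmax; rewrite dotv_suml.
rewrite -[dotv v g]mul1r -al1 mulr_suml !big_seq; apply: ler_sum => u uS.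
by rewrite dotvZl ler_wpM2l ?vmax // ltW ?al0.
Qed.

(* The away step moves weight [gam] off [v] and scales the other weights by
   [1 + gam]; [away_ratio (al v)] is the largest [gam] keeping all weights
   nonnegative. *)
Lemma away_step_mem K A S (al : 'rV[R]_n -> R) x v (gam : R) :
  convex_setR K -> (forall v, v \in A -> K v) -> active_set A S al x -> v \in S ->
  0 <= gam -> (gam%:E <= away_ratio (al v))%E -> K (x + gam *: (x - v)).
Proof.
move=> cK AK [Su [SA [al0 [al1 xE]]]] vS g0 gle.
pose be u := (1 + gam) * al u - (u == v)%:R * gam.
have pick_v : \sum_(u <- S) ((u == v)%:R * gam) *: u = gam *: v.
  rewrite (bigD1_seq v) //= eqxx mul1r big1 ?addr0 // => u /negbTE ->.
  by rewrite mul0r scale0r.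
have pick_v1 : \sum_(u <- S) (u == v)%:R * gam = gam.
  by rewrite (bigD1_seq v) //= eqxx mul1r big1 ?addr0 // => u /negbTE ->; rewrite mul0r.
have -> : x + gam *: (x - v) = \sum_(u <- S) be u *: u.
  rewrite (eq_bigr (fun u => ((1 + gam) * al u) *: u - ((u == v)%:R * gam) *: u)).
    rewrite sumrB pick_v -(eq_bigr _ (fun u _ => scalerA (1 + gam) (al u) u)).
    by rewrite -scaler_sumr -xE scalerDl scale1r scalerBr addrA.
  by move=> u _; rewrite scalerBl.
apply: convex_setR_sum => // [u uS|u uS|]; first exact/AK/SA.
  rewrite /be; have alu := al0 u uS.
  case: eqP => [->|_]; last by rewrite mul0r subr0; nra.
  have av1 : al v <= 1.
    rewrite -al1 (bigD1_seq v) //= lerDl big_seq_cond.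
    by apply: sumr_ge0 => w /andP[wS _]; exact/ltW/al0.
  move: gle; rewrite /away_ratio mul1r.
  case: eqP => [->|/eqP an]; first by rewrite mulr1 addrK.
  rewrite lee_fin ler_pdivlMr ?subr_gt0 ?lt_def ?av1 1?eq_sym ?an //; nra.
by rewrite /be sumrB -mulr_sumr al1 mulr1 pick_v1 addrK.
Qed.

End ConvexCombinations.

Section FirstOrder.
Context {R : realType}.

Lemma diff_le_slope (V : normedModType R) (f : V -> R) (a v : V) (B : R) :
  differentiable f a -> (forall h, 0 < h <= 1 -> f (a + h *: v) - f a <= h * B) ->
  'd f a v <= B.
Proof.
move=> df slope; rewrite -deriveE //.
apply: (cvgr_to_le (cvg_dnbhs_at_right (@diff_derivable _ _ _ f a v df))).
near=> h; have h0 : 0 < h by near: h; exact: nbhs_right_gt.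
have h1 : h <= 1 by near: h; exact: nbhs_right_le.
rewrite /= -(ler_pM2l h0) mulrA mulfV ?gt_eqF // mul1r [_ + a]addrC.
by apply: slope; rewrite h0 h1.
Unshelve. all: by end_near.
Qed.

Lemma diff_le_convex (V : normedModType R) (f : V -> R) (a v : V) :
  differentiable f a ->
  (forall h, 0 < h <= 1 -> f (a + h *: v) <= (1 - h) * f a + h * f (a + v)) ->
  'd f a v <= f (a + v) - f a.
Proof.
move=> df cvx; apply: diff_le_slope => // h h01.
by have := cvx h h01; rewrite mulrBr mulrBl mul1r; lra.
Qed.

Lemma strongly_convex_on_le {n : nat} (K : set 'rV[R]_n) mu f x y (t : R) :
  strongly_convex_on K mu f -> 0 <= mu -> K x -> K y -> 0 <= t <= 1 ->
  f (t *: x + (1 - t) *: y) <= t * f x + (1 - t) * f y.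
Proof.
move=> sc mu0 Kx Ky /andP[t0 t1].
have := sc x y t Kx Ky; rewrite t0 t1 => /(_ isT).
have : 0 <= mu / 2 * t * (1 - t) * dotv (x - y) (x - y).
  by rewrite !mulr_ge0 ?divr_ge0 ?dotv_ge0 ?subr_ge0.
lra.
Qed.

Lemma strongly_convex_min_lt {n : nat} (K : set 'rV[R]_n) mu f xm x :
  convex_setR K -> 0 < mu -> strongly_convex_on K mu f -> K xm ->
  (forall z, K z -> f xm <= f z) -> K x -> x <> xm -> f xm < f x.
Proof.
move=> cK mu0 sc Kxm fmin Kx xn.
have h12 : 0 <= (2^-1 : R) <= 1.
  by apply/andP; split; rewrite ?invr_ge0 ?invf_le1 //; lra.
have := sc x xm 2^-1 Kx Kxm h12; have := fmin _ (cK x xm 2^-1 Kx Kxm h12).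
have : 0 < mu * dotv (x - xm) (x - xm).
  by rewrite mulr_gt0 // dotv_gt0 // subr_eq0; exact/eqP.
lra.
Qed.

Lemma dotv_row_linear {n : nat} (phi : 'rV[R]_n -> R) :
  (forall u w, phi (u + w) = phi u + phi w) ->
  (forall a u, phi (a *: u) = a * phi u) ->
  forall u, phi u = dotv u (\row_i phi (delta_mx 0 i)).
Proof.
move=> phiD phiZ u; have phi0 : phi 0 = 0 by rewrite -[0](scale0r 0) phiZ mul0r.
rewrite {1}(row_sum_delta u) (big_morph phi phiD phi0).
by apply: eq_bigr => i _; rewrite phiZ mxE.
Qed.

Variables (n m : nat) (L : 'rV[R]_n -> 'rV[R]_m -> R).

Lemma diff_gradx x y dx : 'd (Lpair L) (x, y) (dx, 0) = dotv dx (gradx L x y).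
Proof.
move: dx; apply: dotv_row_linear => [u w|a u].
  rewrite -linearD; congr ('d _ _ _).
  by apply: injective_projections; rewrite /= ?addr0.
rewrite -[a * _]/(a *: _) -linearZ; congr ('d _ _ _).
by apply: injective_projections; rewrite /= ?scaler0.
Qed.

Lemma diff_grady x y dy : 'd (Lpair L) (x, y) (0, dy) = dotv dy (grady L x y).
Proof.
move: dy; apply: dotv_row_linear => [u w|a u].
  rewrite -linearD; congr ('d _ _ _).
  by apply: injective_projections; rewrite /= ?addr0.
rewrite -[a * _]/(a *: _) -linearZ; congr ('d _ _ _).
by apply: injective_projections; rewrite /= ?scaler0.
Qed.

Lemma gradx_le (X : set 'rV[R]_n) x x' y mu :
  X x -> X x' -> differentiable (Lpair L) (x, y) -> 0 <= mu ->
  strongly_convex_on X mu (fun x => L x y) ->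
  dotv (x' - x) (gradx L x y) <= L x' y - L x y.
Proof.
move=> Xx Xx' df mu0 sc; rewrite -diff_gradx.
have endpt : (x, y) + (x' - x, 0) = (x', y).
  by apply: injective_projections; rewrite /= ?addr0 ?subrKC.
have := diff_le_convex (v := (x' - x, 0)) df; rewrite endpt /Lpair /=.
apply => h /andP[h0 h1].
rewrite scaler0 addr0 -convex_comb_step [X in _ <= X]addrC.
by apply: (strongly_convex_on_le sc) => //; rewrite h1 ltW.
Qed.

Lemma grady_le (Y : set 'rV[R]_m) x y y' mu :
  Y y -> Y y' -> differentiable (Lpair L) (x, y) -> 0 <= mu ->
  strongly_convex_on Y mu (fun y => - L x y) ->
  dotv (y' - y) (- grady L x y) <= - L x y' - - L x y.
Proof.
move=> Yy Yy' df mu0 sc; rewrite dotvNr -diff_grady.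
have endpt : (x, y) + (0, y' - y) = (x, y').
  by apply: injective_projections; rewrite /= ?addr0 ?subrKC.
have := diff_le_convex (v := (0, y' - y)) (differentiableN df).
rewrite diffN // endpt opprfctE; apply => h /andP[h0 h1] /=.
rewrite /Lpair /= scaler0 addr0 -convex_comb_step [X in _ <= X]addrC.
by apply: (strongly_convex_on_le sc) => //; rewrite h1 ltW.
Qed.

End FirstOrder.

Section RayExit.
Context {R : realType}.

Lemma aff_hull_line (V : lmodType R) (K : set V) x y (t : R) :
  K x -> K y -> aff_hull K (x + t *: (y - x)).
Proof.
move=> Kx Ky; exists 2%N, (fun i => if i == ord0 then x else y).
exists (fun i => if i == ord0 then 1 - t else t).
split; first by move=> i; case: ifP.
rewrite !big_ord_recl !big_ord0 /= !addr0 subrK; split => //.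
by rewrite [RHS]addrC convex_comb_step.
Qed.

Context {n : nat}.
Implicit Types (K : set 'rV[R]_n) (x d : 'rV[R]_n).

Lemma ray_sup_mem K x d : compact K -> K x -> K (x + d) -> d != 0 ->
  let lam := sup [set l : R | 0 <= l /\ K (x + l *: d)] in
  [/\ 1 <= lam, K (x + lam *: d) & forall l, lam < l -> ~ K (x + l *: d)].
Proof.
move=> cK Kx Kxd d0; set Lam := [set l : R | _] => lam.
have nd : 0 < `|d| by rewrite normr_gt0.
have Lam1 : Lam 1 by split; rewrite ?scale1r.
have supLam : has_sup Lam.
  split; first by exists 1.
  have [M [_ KM]] := compact_bounded cK.
  have {}KM := KM (M + 1) (ltr_pwDr ltr01 (lexx M)).
  exists ((M + 1 + (M + 1)) / `|d|) => l [l0 Kl]; rewrite ler_pdivlMr //.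
  have : `|l *: d| <= `|x + l *: d| + `|x|.
    by rewrite -{1}[l *: d](addKr x) addrC ler_normB.
  by rewrite normrZ ger0_norm //; have /= := KM _ Kl; have /= := KM _ Kx; lra.
have lam1 : 1 <= lam by apply: sup_upper_bound.
split => // [|l laml Kl]; last first.
  have l0 : 0 <= l by lra.
  by have := sup_upper_bound supLam (conj l0 Kl); rewrite -/lam; lra.
have /closure_id -> : closed K.
  by apply: compact_closed => //; exact: norm_hausdorff.
move=> B /nbhs_ballP [e e0 eB].
have [l [l0 Kl] ltl] := sup_adherent (divr_gt0 e0 nd) supLam.
exists (x + l *: d); split => //; apply: eB.
have lle : l <= lam by apply: sup_upper_bound.
rewrite -ball_normE /ball_ /= [x + lam *: d]addrC addrKA -scalerBl.
rewrite normrZ ger0_norm ?subr_ge0 //.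
by rewrite -ltr_pdivlMr //; rewrite -/lam in ltl; lra.
Qed.

Lemma ray_relbd K x xc : compact K -> K x -> K xc -> x <> xc ->
  exists lam : R,
    [/\ 1 <= lam, relbd K (x + lam *: (xc - x)) & K (x + lam *: (xc - x))].
Proof.
move=> cK Kx Kxc xxc; set d := xc - x.
have d0 : d != 0 by rewrite subr_eq0; apply/eqP => /esym.
have Kxd : K (x + d) by rewrite /d subrKC.
have [lam1 Ks beyond] := ray_sup_mem cK Kx Kxd d0.
set lam := sup _ in lam1 Ks beyond *; exists lam; split => //.
split; first exact: subset_closure.
move=> [_ [e [e0 relK]]]; have S0 : 0 < sqnv d by exact: dotv_gt0.
set del := e / (sqnv d + e).
have del0 : 0 < del by rewrite divr_gt0 // addr_gt0.
have delE : del * (sqnv d + e) = e by rewrite mulfVK // gt_eqF // addr_gt0.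
apply: (beyond (lam + del)); first lra.
apply: relK; first by rewrite /d; exact: aff_hull_line.
rewrite -/d scalerDl addrA [_ + del *: d]addrC addrK.
rewrite /sqnv dotvZl dotvZr -/(sqnv d).
have del1 : del < 1 by nra.
nra.
Qed.
End RayExit.

Section ScalarBounds.
Context {R : realType}.

Lemma curv_ratio_le (g E c : R) :
  0 < g -> 2 / g ^+ 2 * E <= c -> E <= g ^+ 2 * c / 2.
Proof.
move=> g0 le; rewrite -(ler_pM2l (_ : 0 < 2 / g ^+ 2)) ?divr_gt0 ?exprn_gt0 //.
by rewrite (_ : 2 / g ^+ 2 * (g ^+ 2 * c / 2) = c) //; field; rewrite gt_eqF.
Qed.

Lemma scaled_gap_le_sqr_div (lam q a G : R) :
  0 < a -> 0 < lam -> lam * q <= G ->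
  2 * lam ^+ 2 * (q - a) <= G ^+ 2 / (2 * a).
Proof.
move=> a0 lam0 qG; rewrite ler_pdivlMr ?mulr_gt0 //.
have [qa|aq] := leP q a; first by have := sqr_ge0 G; nra.
have lq : 0 <= lam * q by rewrite mulr_ge0 //; lra.
have : (lam * q) ^+ 2 <= G ^+ 2 by rewrite ler_sqr ?nnegrE //; lra.
have := sqr_ge0 (q - 2 * a); have := sqr_ge0 lam; nra.
Qed.

Lemma ratio_gap_le_sqr_div (q D a G : R) : 0 < a -> 0 <= D -> D <= G ->
  2 / (q / D) ^+ 2 * (q - a) <= G ^+ 2 / (2 * a).
Proof.
move=> a0 D0 DG.
have G2a : 0 <= G ^+ 2 / (2 * a) by rewrite divr_ge0 ?sqr_ge0 ?mulr_ge0 //; lra.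
(* With the junk value [x / 0 = 0] the left-hand side vanishes if [D] or [q] is [0]. *)
have [->|Dn0] := eqVneq D 0; first by rewrite invr0 mulr0 expr0n /= invr0 mulr0 mul0r.
have [->|qn0] := eqVneq q 0; first by rewrite mul0r expr0n /= invr0 mulr0 mul0r.
have -> : 2 / (q / D) ^+ 2 = 2 * D ^+ 2 / q ^+ 2 by field; rewrite Dn0 qn0.
have q2 : 0 < q ^+ 2 by rewrite exprn_even_gt0.
have [qa|aq] := leP q a.
  apply: (le_trans _ G2a); apply: mulr_ge0_le0; last by lra.
  by rewrite divr_ge0 ?sqr_ge0 // mulr_ge0 ?sqr_ge0.
rewrite [_ / _ * _]mulrAC ler_pdivrMr //.
rewrite [_ / _ * _]mulrAC ler_pdivlMr ?mulr_gt0 //.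
have : D ^+ 2 <= G ^+ 2 by rewrite ler_sqr ?nnegrE //; lra.
have := sqr_ge0 (q - 2 * a); nra.
Qed.

Lemma sqrt_gaps_le (mu gx gy hx hy ax ay : R) : 0 < mu ->
  0 <= gx -> 0 <= gy -> 0 <= hx -> 0 <= hy -> ax + ay = hx + hy ->
  (0 < ax -> mu <= gx ^+ 2 / (2 * ax)) -> (0 < ay -> mu <= gy ^+ 2 / (2 * ay)) ->
  Num.sqrt mu * (Num.sqrt hx + Num.sqrt hy) <= gx + gy.
Proof.
move=> mu0 gx0 gy0 hx0 hy0 eh Hx Hy.
have bound a g : (0 < a -> mu <= g ^+ 2 / (2 * a)) -> 2 * mu * a <= g ^+ 2.
  move=> H; have [a0|a0] := ltP 0 a; last by have := sqr_ge0 g; nra.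
  by have := H a0; rewrite ler_pdivlMr ?mulr_gt0 //; lra.
have {}Hx := bound _ _ Hx; have {}Hy := bound _ _ Hy.
have smu := sqr_sqrtr (ltW mu0); have shx := sqr_sqrtr hx0; have shy := sqr_sqrtr hy0.
have := sqrtr_ge0 mu; have := sqrtr_ge0 hx; have := sqrtr_ge0 hy.
move: smu shx shy; set a := Num.sqrt mu; set b := Num.sqrt hx; set c := Num.sqrt hy.
move=> smu shx shy c0 b0 a0.
have : (a * (b + c)) ^+ 2 <= (gx + gy) ^+ 2.
  have := sqr_ge0 (b - c); rewrite sqrrB exprMn sqrrD smu shx shy; nra.
by rewrite ler_sqr ?nnegrE ?mulr_ge0 ?addr_ge0.
Qed.

Lemma sqrt_gaps_le_inv_sqrt (mue : \bar R) (M gx gy hx hy ax ay : R) :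
  (0 < mue)%E -> 0 <= M -> 0 <= gx -> 0 <= gy -> 0 <= hx -> 0 <= hy ->
  ax + ay = hx + hy ->
  (0 < ax -> (mue <= (gx ^+ 2 / (2 * ax))%:E)%E) ->
  (0 < ay -> (mue <= (gy ^+ 2 / (2 * ay))%:E)%E) ->
  M * (Num.sqrt hx + Num.sqrt hy) <= M * inv_sqrt_e mue * (gx + gy).
Proof.
case: mue => [mu| |] //= mu0 M0 gx0 gy0 hx0 hy0 eh Hx Hy.
  rewrite lte_fin in mu0; have smu : 0 < Num.sqrt mu by rewrite sqrtr_gt0.
  rewrite -mulrA ler_wpM2l // mulrC ler_pdivlMr // mulrC.
  by apply: (sqrt_gaps_le (ax := ax) (ay := ay)) => // [/Hx|/Hy]; rewrite lee_fin.
have ax0 : ax <= 0 by rewrite leNgt; apply/negP => /Hx; rewrite leye_eq.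
have ay0 : ay <= 0 by rewrite leNgt; apply/negP => /Hy; rewrite leye_eq.
have -> : hx = 0 by lra.
have -> : hy = 0 by lra.
by rewrite sqrtr0 addr0 !mulr0 mul0r.
Qed.

Lemma nu_step_le (w1 w0 gam gd gP K Mi c C : R) :
  w1 <= w0 - gam * gd + gam * K + gam ^+ 2 * C -> K <= Mi * gP -> c * gP <= gd ->
  0 <= gam -> w1 <= w0 - (c - Mi) * gam * gP + gam ^+ 2 * C.
Proof.
move=> w1le KgP gPgd gam0.
have := ler_wpM2l gam0 KgP; have := ler_wpM2l gam0 gPgd; nra.
Qed.

Lemma gap_step_combine (A1 A0 B1 B0 px qx py qy M a b gam cx cy : R) :
  A1 - A0 <= gam * px + gam ^+ 2 * cx / 2 ->
  - B1 - - B0 <= gam * - py + gam ^+ 2 * cy / 2 ->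
  gam * px <= gam * (qx + M * a) -> gam * qy <= gam * (py + M * b) ->
  A1 - B1 <= A0 - B0 - gam * (- qx + qy) + gam * (M * (b + a))
             + gam ^+ 2 * ((cx + cy) / 2).
Proof. by rewrite !mulrDr !mulrN; lra. Qed.

End ScalarBounds.

Section GapBounds.
Context {R : realType} {k : nat}.
Implicit Types (K : set 'rV[R]_k) (A S : seq 'rV[R]_k) (f : 'rV[R]_k -> R)
  (gf : 'rV[R]_k -> 'rV[R]_k).

Lemma seq_argmin (T : eqType) (s : seq T) (P : T -> Prop) (phi : T -> R) :
  (exists2 u, u \in s & P u) ->
  exists u, [/\ u \in s, P u & forall w, w \in s -> P w -> phi u <= phi w].
Proof.
elim: s => [[u //]|a s IH] exPs.
have [b [bs Pb bmin]] : exists b, [/\ b \in a :: s, P b &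
    forall w, w \in s -> P w -> phi b <= phi w].
  have [[w ws Pw]|nP] := pselect (exists2 w, w \in s & P w).
    have [b [bs Pb bmin]] := IH (ex_intro2 _ _ w ws Pw).
    by exists b; rewrite inE bs orbT.
  case: exPs => u us Pu; exists u; split => // w ws Pw.
  by exfalso; apply: nP; exists w.
have [[Pa ab]|] := pselect (P a /\ phi a < phi b).
  exists a; split; rewrite ?mem_head // => w; rewrite inE => /predU1P[->|ws] Pw //.
  exact/ltW/(lt_le_trans ab (bmin _ ws Pw)).
move=> /not_andP nab; exists b; split => // w.
rewrite inE => /predU1P[->|]; last exact: bmin.
by move=> Pa; case: nab => // /negP; rewrite -leNgt.
Qed.

Lemma curv_vals_step_le (K : set 'rV[R]_k) f gf x s v (gam c : R) :
  K x -> K s -> K v -> 0 <= gam -> K (x + gam *: (s - v)) ->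
  (forall r, curv_vals K f gf r -> r <= c) ->
  f (x + gam *: (s - v)) - f x <= gam * dotv (s - v) (gf x) + gam ^+ 2 * c / 2.
Proof.
move=> Kx Ks Kv g0 Kxg curv; have [->|gn0] := eqVneq gam 0.
  by rewrite scale0r addr0 subrr !mul0r expr0n /= mul0r mul0r addr0.
have gp : 0 < gam by rewrite lt_def gn0.
rewrite -lerBlDl; apply: curv_ratio_le => //; apply: curv.
by exists x, s, v, gam.
Qed.

Lemma muint_gap_le K xc xt f gf sv (mue : \bar R) :
  compact K -> K xt -> K xc ->
  (forall r, muint_vals K xc f gf r -> (mue <= r%:E)%E) ->
  (forall s, K s -> dotv sv (gf xt) <= dotv s (gf xt)) ->
  0 < f xt - f xc ->
  (mue <= ((dotv (xt - sv) (gf xt)) ^+ 2 / (2 * (f xt - f xc)))%:E)%E.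
Proof.
move=> cK Kxt Kxc mule FW gap.
have xn : xt <> xc by move=> e; move: gap; rewrite e subrr ltxx.
have [lam [lam1 bd Ks]] := ray_relbd cK Kxt Kxc xn.
set s := xt + lam *: (xc - xt) in bd Ks.
have lam0 : 0 < lam by lra.
have sxc : xt + lam^-1 *: (s - xt) = xc.
  by rewrite /s addrAC subrr add0r scalerA mulVf ?gt_eqF // scale1r subrKC.
(* [xc] is the point at parameter [lam^-1] on the segment from [xt] to [s]. *)
apply: le_trans (mule _ _) _.
  exists xt, lam^-1, s, lam; split => //; split => //; split => //.
  by rewrite invr_gt0 lam0 invf_le1.
rewrite lee_fin sxc exprVn invrK -[xc - xt]opprB dotvNl opprK.
rewrite -[f xc - f xt]opprB addrC; apply: scaled_gap_le_sqr_div => //.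
have := FW s Ks; rewrite /s dotvDl dotvZl -[xc - xt]opprB dotvNl.
by rewrite [dotv (xt - sv) _]dotvBl; lra.
Qed.

Lemma muA_gap_le A xc xt f gf sv S al vS (mue : \bar R) :
  conv_hull A xt -> conv_hull A xc ->
  (forall r, muA_vals (conv_hull A) A f gf r -> (mue <= r%:E)%E) ->
  (forall s, conv_hull A s -> dotv sv (gf xt) <= dotv s (gf xt)) ->
  active_set A S al xt -> vS \in S ->
  (forall u, u \in S -> dotv u (gf xt) <= dotv vS (gf xt)) ->
  dotv (xc - xt) (gf xt) <= f xc - f xt -> 0 < f xt - f xc ->
  (mue <= ((dotv (vS - sv) (gf xt)) ^+ 2 / (2 * (f xt - f xc)))%:E)%E.
Proof.
move=> Kxt Kxc mule FW act vSS vmax grad gap; set g := gf xt in FW vmax grad *.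
have [_ [subA _]] := act; have vA : vS \in A by exact: subA.
(* [s] and [v] realise the atoms [s_f(xt)] and [v_f(xt)] of [muA_vals]. *)
have [s [sA _ smin]] :=
  seq_argmin (P := fun _ => True) (dotv g) (ex_intro2 _ _ vS vA I).
pose P u := exists S', pos_comb A S' xt /\ is_vS g S' u.
have PvS : P vS.
  have [Su [_ [al0 [al1 xE]]]] := act.
  exists S; split; first by split => //; split => //; exists al.
  by split => // u uS; rewrite !(dotvC g); apply: vmax.
have [v [vA' Pv vmin]] := seq_argmin (dotv g) (ex_intro2 _ _ vS vA PvS).
have sf : is_sf A g s by split => // u uA; apply: smin.
have vf : is_vf A g xt v.
  split => // S' v' pc hv; apply: vmin; last by exists S'.
  by case: pc => _ [sub _]; case: hv => /sub.
set r := 2 / (gammaA g xt xc s v) ^+ 2 * (f xc - f xt - dotv (xc - xt) g).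
apply: le_trans (mule r _) _.
  have neg : dotv g (xc - xt) < 0 by rewrite dotvC; lra.
  by exists xt, xc, s, v; do 5!(split => //).
rewrite lee_fin /r /gammaA (dotvNl g (xc - xt)) (dotvC (xc - xt)).
have -> : f xc - f xt - dotv g (xc - xt) = - dotv g (xc - xt) - (f xt - f xc) by ring.
apply: ratio_gap_le_sqr_div => //.
  by rewrite dotvNl dotvBr opprB subr_ge0; apply: smin.
rewrite dotvNl dotvBr opprB dotvBl !(dotvC g); apply: lerB.
  by rewrite !(dotvC _ g); apply: vmin.
by apply: FW; apply: conv_hull_mem.
Qed.

End GapBounds.

Section Constants.
Context {R : realType} {n m : nat}.

Lemma fin_num_halfD (a b : \bar R) : (0 <= a)%E -> (0 <= b)%E ->
  ((a + b) * (2^-1)%:E)%E \is a fin_num -> a \is a fin_num /\ b \is a fin_num.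
Proof.
have h2 : (0 < 2^-1 :> R) by rewrite invr_gt0.
by case: a b => [a| |] [b| |] //= _ _; rewrite gt0_mulye ?lte_fin.
Qed.

Variables (X : set 'rV[R]_n) (Y : set 'rV[R]_m) (L : 'rV[R]_n -> 'rV[R]_m -> R).

Lemma CL_e_bounds x0 y0 : X x0 -> Y y0 -> CL_e X Y L \is a fin_num ->
  exists cx cy, [/\ fine (CL_e X Y L) = (cx + cy) / 2,
   forall y, Y y -> forall r,
     curv_vals X (fun x => L x y) (fun x => gradx L x y) r -> r <= cx &
   forall x, X x -> forall r,
     curv_vals Y (fun y => - L x y) (fun y => - grady L x y) r -> r <= cy].
Proof.
move=> Xx0 Yy0; rewrite /CL_e; set a := ereal_sup _; set b := ereal_sup _ => fin.
have curv0 k (K : set 'rV[R]_k) f gf z : K z -> curv_vals K f gf 0.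
  move=> Kz; exists z, z, z, 1; rewrite subrr scaler0 addr0.
  by do 4!split => //; rewrite subrr mul1r dotv0l subr0 mulr0.
have a0 : (0 <= a)%E.
  by apply: ereal_sup_ubound; exists 0 => //; exists y0 => //; exact: curv0 Xx0.
have b0 : (0 <= b)%E.
  by apply: ereal_sup_ubound; exists 0 => //; exists x0 => //; exact: curv0 Yy0.
have [fa fb] := fin_num_halfD a0 b0 fin.
exists (fine a), (fine b); split; first by rewrite -{1}(fineK fa) -{1}(fineK fb).
  move=> y Yy r hr; rewrite -lee_fin fineK //.
  by apply: ereal_sup_ubound; exists r => //; exists y.
move=> x Xx r hr; rewrite -lee_fin fineK //.
by apply: ereal_sup_ubound; exists r => //; exists x.
Qed.

Variables (xs : 'rV[R]_n) (ys : 'rV[R]_m).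

Lemma ML_e_bounds : X xs -> Y ys -> ML_e X Y L xs ys \is a fin_num ->
  [/\ 0 <= fine (ML_e X Y L xs ys),
   forall y x s v, Y y -> y <> ys -> X x -> X s -> X v ->
     dotv (s - v) ((Num.sqrt (L xs ys - L xs y))^-1 *: (gradx L x ys - gradx L x y))
       <= fine (ML_e X Y L xs ys) &
   forall x y s v, X x -> x <> xs -> Y y -> Y s -> Y v ->
     dotv (s - v) ((Num.sqrt (L x ys - L xs ys))^-1 *: (grady L x y - grady L xs y))
       <= fine (ML_e X Y L xs ys)].
Proof.
move=> Xxs Yys fin; set M := fine _; have := fineK fin; rewrite -/M /ML_e.
set a := ereal_sup _; set b := ereal_sup _ => eM.
have Ma r : (r%:E <= a)%E -> r <= M by rewrite -lee_fin eM le_max => ->.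
have Mb r : (r%:E <= b)%E -> r <= M by rewrite -lee_fin eM le_max orbC => ->.
have H1 y x s v : Y y -> y <> ys -> X x -> X s -> X v ->
    dotv (s - v) ((Num.sqrt (L xs ys - L xs y))^-1 *: (gradx L x ys - gradx L x y)) <= M.
  by move=> Yy yn Xx Xs Xv; apply/Ma/ereal_sup_ubound/imageP; exists y, x, s, v.
have H2 x y s v : X x -> x <> xs -> Y y -> Y s -> Y v ->
    dotv (s - v) ((Num.sqrt (L x ys - L xs ys))^-1 *: (grady L x y - grady L xs y)) <= M.
  by move=> Xx xn Yy Ys Yv; apply/Mb/ereal_sup_ubound/imageP; exists x, y, s, v.
split => //.
(* The choice [s = v] gives the value [0] unless [X] and [Y] are singletons,
   in which case both suprema are [-oo]. *)
have [[y Yy yn]|ny] := pselect (exists2 y, Y y & y <> ys).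
  by have := H1 y xs xs xs Yy yn Xxs Xxs Xxs; rewrite subrr dotv0l.
have [[x Xx xn]|nx] := pselect (exists2 x, X x & x <> xs).
  by have := H2 x ys ys ys Xx xn Yys Yys Yys; rewrite subrr dotv0l.
suff [ea eb] : a = -oo%E /\ b = -oo%E by move: eM; rewrite ea eb maxNye.
split; apply/eqP; rewrite -leeNy_eq.
  by apply: ge_ereal_sup => e [r [z [_ [_ [_ [Hz [zn _]]]]]] _]; case: ny; exists z.
by apply: ge_ereal_sup => e [r [z [_ [_ [_ [Hz [zn _]]]]]] _]; case: nx; exists z.
Qed.

End Constants.

Section Directions.
Context {R : realType} {n m : nat}.
Variables (X : set 'rV[R]_n) (Y : set 'rV[R]_m) (L : 'rV[R]_n -> 'rV[R]_m -> R).
Variables (xt : 'rV[R]_n) (yt : 'rV[R]_m).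

Lemma neg_r_dotB (a b : 'rV[R]_n) (c d : 'rV[R]_m) :
  neg_r_dot L xt yt (a - b) (c - d) =
  dotv (b - a) (gradx L xt yt) + dotv (d - c) (- grady L xt yt).
Proof.
rewrite /neg_r_dot (dotvC (gradx L xt yt)) (dotvC (grady L xt yt)).
by rewrite !dotvBl !dotvNr; ring.
Qed.

Lemma neg_r_dotD (a b : 'rV[R]_n) (c d : 'rV[R]_m) :
  neg_r_dot L xt yt (a + b) (c + d) = neg_r_dot L xt yt a c + neg_r_dot L xt yt b d.
Proof. by rewrite /neg_r_dot !dotvDr; ring. Qed.

Lemma FW_atom_split sx sy : FW_atom X Y L xt yt sx sy ->
  (forall s, X s -> dotv sx (gradx L xt yt) <= dotv s (gradx L xt yt)) /\
  (forall s, Y s -> dotv sy (- grady L xt yt) <= dotv s (- grady L xt yt)).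
Proof.
move=> [Xsx [Ysy FW]]; split => s Ks.
  by have := FW s sy Ks Ysy; rewrite lerD2r.
by have := FW sx s Xsx Ks; rewrite lerD2l.
Qed.

Lemma away_atom_split Sx Sy vx vy : away_atom L xt yt Sx Sy vx vy ->
  (forall u, u \in Sx -> dotv u (gradx L xt yt) <= dotv vx (gradx L xt yt)) /\
  (forall u, u \in Sy -> dotv u (- grady L xt yt) <= dotv vy (- grady L xt yt)).
Proof.
move=> [vxS [vyS AW]]; split => u uS.
  by have := AW u vy uS vyS; rewrite lerD2r.
by have := AW vx u vxS uS; rewrite lerD2l.
Qed.

End Directions.

Section SaddleStep.
Context {R : realType} {n m : nat}.
Variables (X : set 'rV[R]_n) (Y : set 'rV[R]_m) (L : 'rV[R]_n -> 'rV[R]_m -> R).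
Variables (xs : 'rV[R]_n) (ys : 'rV[R]_m).
Hypotheses (cvX : convex_setR X) (cvY : convex_setR Y).
Hypothesis hsc : unif_strongly_convex_concave X Y L.
Hypothesis hsp : saddle_point X Y L xs ys.
Hypothesis hCL : CL_e X Y L \is a fin_num.
Hypothesis hML : ML_e X Y L xs ys \is a fin_num.
Hypothesis dL : forall x y, X x -> Y y -> differentiable (Lpair L) (x, y).

Local Notation CL := (fine (CL_e X Y L)).
Local Notation ML := (fine (ML_e X Y L xs ys)).

Lemma saddle_gapx_gt0 x : X x -> x <> xs -> 0 < L x ys - L xs ys.
Proof.
have [muX [_ [muX0 [_ [scX _]]]]] := hsc; have [Xxs [Yys Hs]] := hsp.
move=> Xx xn; rewrite subr_gt0.
apply: (strongly_convex_min_lt cvX muX0 (scX _ Yys)) => //.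
by move=> z Xz; have /andP[] := Hs z ys Xz Yys.
Qed.

Lemma saddle_gapy_gt0 y : Y y -> y <> ys -> 0 < L xs ys - L xs y.
Proof.
have [_ [muY [_ [muY0 [_ scY]]]]] := hsc; have [Xxs [Yys Hs]] := hsp.
move=> Yy yn; rewrite subr_gt0 -ltrN2.
apply: (strongly_convex_min_lt cvY muY0 (scY _ Xxs)) => //.
by move=> z Yz; rewrite lerN2; have /andP[] := Hs xs z Xxs Yz.
Qed.

Lemma gradx_cross_le x y s v : X x -> Y y -> X s -> X v ->
  dotv (s - v) (gradx L x ys) <=
  dotv (s - v) (gradx L x y) + ML * Num.sqrt (L xs ys - L xs y).
Proof.
have [Xxs [Yys _]] := hsp; have [_ Mx _] := ML_e_bounds Xxs Yys hML.
(* [M_L] only constrains [y <> ys], its quotient dividing by [sqrt 0]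
   otherwise; at [y = ys] the claim is trivial. *)
move=> Xx Yy Xs Xv; have [->|/eqP yn] := eqVneq y ys.
  by rewrite subrr sqrtr0 mulr0 addr0.
have sp : 0 < Num.sqrt (L xs ys - L xs y) by rewrite sqrtr_gt0 saddle_gapy_gt0.
have := Mx y x s v Yy yn Xx Xs Xv.
by rewrite dotvZr dotvBr mulrC ler_pdivrMr // lerBlDl.
Qed.

Lemma grady_cross_le x y s v : X x -> Y y -> Y s -> Y v ->
  dotv (s - v) (grady L x y) <=
  dotv (s - v) (grady L xs y) + ML * Num.sqrt (L x ys - L xs ys).
Proof.
have [Xxs [Yys _]] := hsp; have [_ _ My] := ML_e_bounds Xxs Yys hML.
move=> Xx Yy Ys Yv; have [->|/eqP xn] := eqVneq x xs.
  by rewrite subrr sqrtr0 mulr0 addr0.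
have sp : 0 < Num.sqrt (L x ys - L xs ys) by rewrite sqrtr_gt0 saddle_gapx_gt0.
have := My x y s v Xx xn Yy Ys Yv.
by rewrite dotvZr dotvBr mulrC ler_pdivrMr // lerBlDl.
Qed.

Lemma wgap_step_le xt yt s1 v1 s2 v2 gam :
  X xt -> Y yt -> X s1 -> X v1 -> Y s2 -> Y v2 -> 0 <= gam ->
  X (xt + gam *: (s1 - v1)) -> Y (yt + gam *: (s2 - v2)) ->
  wgap L xs ys (xt + gam *: (s1 - v1)) (yt + gam *: (s2 - v2)) <=
  wgap L xs ys xt yt - gam * neg_r_dot L xt yt (s1 - v1) (s2 - v2)
  + gam * (ML * (Num.sqrt (L xt ys - L xs ys) + Num.sqrt (L xs ys - L xs yt)))
  + gam ^+ 2 * CL.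
Proof.
move=> Xxt Yyt Xs1 Xv1 Ys2 Yv2 g0 Xn Yn; have [Xxs [Yys _]] := hsp.
have [cx [cy [-> Cx Cy]]] := CL_e_bounds Xxs Yys hCL.
have Ex := curv_vals_step_le Xxt Xs1 Xv1 g0 Xn (Cx _ Yys).
have Ey := curv_vals_step_le Yyt Ys2 Yv2 g0 Yn (Cy _ Xxs).
have Gx := ler_wpM2l g0 (gradx_cross_le Xxt Yyt Xs1 Xv1).
have Gy := ler_wpM2l g0 (grady_cross_le Xxt Yyt Ys2 Yv2).
rewrite /wgap /neg_r_dot (dotvC (gradx L xt yt)) (dotvC (grady L xt yt)).
by rewrite dotvNr in Ey; exact: gap_step_combine Ex Ey Gx Gy.
Qed.

Lemma cross_term_le xt yt (mue : \bar R) gx gy :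
  X xt -> Y yt -> (0 < mue)%E -> 0 <= gx -> 0 <= gy ->
  (0 < L xt yt - L xs yt -> (mue <= (gx ^+ 2 / (2 * (L xt yt - L xs yt)))%:E)%E) ->
  (0 < L xt ys - L xt yt -> (mue <= (gy ^+ 2 / (2 * (L xt ys - L xt yt)))%:E)%E) ->
  ML * (Num.sqrt (L xt ys - L xs ys) + Num.sqrt (L xs ys - L xs yt)) <=
  ML * inv_sqrt_e mue * (gx + gy).
Proof.
move=> Xxt Yyt mu0 gx0 gy0 Hx Hy; have [Xxs [Yys Hs]] := hsp.
have [M0 _ _] := ML_e_bounds Xxs Yys hML.
apply: (sqrt_gaps_le_inv_sqrt (ax := L xt yt - L xs yt)
  (ay := L xt ys - L xt yt)) => //.
- by rewrite subr_ge0; have /andP[] := Hs xt ys Xxt Yys.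
- by rewrite subr_ge0; have /andP[] := Hs xs yt Xxs Yyt.
- by ring.
Qed.

Lemma wgap_FW_step_le xt yt sx sy gam :
  compact X -> compact Y -> (0 < muint_e X Y L xs ys)%E ->
  X xt -> Y yt -> FW_atom X Y L xt yt sx sy -> 0 <= gam <= 1 ->
  wgap L xs ys (xt + gam *: (sx - xt)) (yt + gam *: (sy - yt)) <=
  wgap L xs ys xt yt - nu_const 1 ML (muint_e X Y L xs ys) * gam
    * neg_r_dot L xt yt (sx - xt) (sy - yt) + gam ^+ 2 * CL.
Proof.
move=> cX cY mu0 Xxt Yyt FW g01; have [Xxs [Yys _]] := hsp.
have [FWx FWy] := FW_atom_split FW; have [Xsx [Ysy _]] := FW.
have g0 : 0 <= gam by case/andP: g01.
apply: nu_step_le (wgap_step_le Xxt Yyt Xsx Xxt Ysy Yyt g0 _ _) _ _ g0.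
- exact: convex_setR_step.
- exact: convex_setR_step.
- rewrite neg_r_dotB; apply: cross_term_le => //.
  + by rewrite dotvBl subr_ge0 FWx.
  + by rewrite dotvBl subr_ge0 FWy.
  + move=> gap.
    apply: (muint_gap_le (f := L^~ yt) (gf := (gradx L)^~ yt) cX Xxt Xxs _ FWx gap).
    move=> r hr; rewrite /muint_e ge_min; apply/orP; left.
    by apply: ereal_inf_lbound; exists r => //; exists yt.
  + have -> : L xt ys - L xt yt = - L xt yt - - L xt ys by rewrite opprK addrC.
    move=> gap; apply: (muint_gap_le (f := fun y => - L xt y)
      (gf := fun y => - grady L xt y) cY Yyt Yys _ FWy gap).
    move=> r hr; rewrite /muint_e ge_min; apply/orP; right.
    by apply: ereal_inf_lbound; exists r => //; exists xt.
- by rewrite mul1r.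
Qed.

Lemma wgap_PFW_step_le A B xt yt Sx Sy alx aly sx sy vx vy s1 v1 s2 v2 gam :
  X = conv_hull A -> Y = conv_hull B -> (0 < muA_e X Y L A B)%E ->
  X xt -> Y yt -> active_set A Sx alx xt -> active_set B Sy aly yt ->
  FW_atom X Y L xt yt sx sy -> away_atom L xt yt Sx Sy vx vy ->
  X s1 -> X v1 -> Y s2 -> Y v2 -> 0 <= gam ->
  X (xt + gam *: (s1 - v1)) -> Y (yt + gam *: (s2 - v2)) ->
  neg_r_dot L xt yt (sx - xt) (sy - yt) <= neg_r_dot L xt yt (s1 - v1) (s2 - v2) ->
  neg_r_dot L xt yt (xt - vx) (yt - vy) <= neg_r_dot L xt yt (s1 - v1) (s2 - v2) ->
  wgap L xs ys (xt + gam *: (s1 - v1)) (yt + gam *: (s2 - v2)) <=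
  wgap L xs ys xt yt - nu_const (1 / 2) ML (muA_e X Y L A B) * gam
    * neg_r_dot L xt yt (sx - xt + (xt - vx)) (sy - yt + (yt - vy)) + gam ^+ 2 * CL.
Proof.
move=> eX eY mu0 Xxt Yyt actx acty FW AW Xs1 Xv1 Ys2 Yv2 g0 Xn Yn FWd AWd.
have half : 1 / 2 * neg_r_dot L xt yt (sx - xt + (xt - vx)) (sy - yt + (yt - vy)) <=
    neg_r_dot L xt yt (s1 - v1) (s2 - v2) by rewrite neg_r_dotD; lra.
have [Xxs [Yys _]] := hsp; have [muX [muY [muX0 [muY0 [scX scY]]]]] := hsc.
have [FWx FWy] := FW_atom_split FW; have [AWx AWy] := away_atom_split AW.
have [vxS [vyS _]] := AW.
apply: nu_step_le (wgap_step_le Xxt Yyt Xs1 Xv1 Ys2 Yv2 g0 Xn Yn) _ half g0.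
rewrite !addrA !subrK neg_r_dotB; apply: cross_term_le => //.
- rewrite dotvBl subr_ge0; apply: le_trans (FWx _ Xxt) _.
  exact: active_set_dotv_le actx AWx.
- rewrite dotvBl subr_ge0; apply: le_trans (FWy _ Yyt) _.
  exact: active_set_dotv_le acty AWy.
- move=> gap; have := gradx_le Xxt Xxs (dL Xxt Yyt) (ltW muX0) (scX _ Yyt).
  rewrite eX in FWx Xxt Xxs.
  move/(muA_gap_le (f := L^~ yt) (gf := (gradx L)^~ yt) Xxt Xxs _ FWx actx vxS AWx).
  apply=> // r hr; rewrite /muA_e ge_min; apply/orP; left.
  by apply: ereal_inf_lbound; exists r => //; exists yt => //; rewrite eX.
- have -> : L xt ys - L xt yt = - L xt yt - - L xt ys by rewrite opprK addrC.
  move=> gap; have := grady_le Yyt Yys (dL Xxt Yyt) (ltW muY0) (scY _ Xxt).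
  rewrite eY in FWy Yyt Yys; move/(muA_gap_le (f := fun y => - L xt y)
    (gf := fun y => - grady L xt y) Yyt Yys _ FWy acty vyS AWy).
  apply=> // r hr; rewrite /muA_e ge_min; apply/orP; right.
  by apply: ereal_inf_lbound; exists r => //; exists xt => //; rewrite eY.
Qed.

End SaddleStep.

Theorem lemma20 (R : realType) (n m : nat)
  (X : set 'rV[R]_n) (Y : set 'rV[R]_m) (L : 'rV[R]_n -> 'rV[R]_m -> R)
  (xs : 'rV[R]_n) (ys : 'rV[R]_m) :
  X !=set0 -> Y !=set0 -> convex_setR X -> convex_setR Y ->
  compact X -> compact Y ->
  (forall x y, X x -> Y y -> differentiable (Lpair L) (x, y)) ->
  unif_strongly_convex_concave X Y L ->
  saddle_point X Y L xs ys ->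
  CL_e X Y L \is a fin_num ->
  ML_e X Y L xs ys \is a fin_num ->
  let C := fine (CL_e X Y L) in
  let M := fine (ML_e X Y L xs ys) in
  (* (I) interior case, FW direction *)
  (relint sqnp (X `*` Y) (xs, ys) -> (0 < muint_e X Y L xs ys)%E ->
   forall xt yt sx sy (gam : R),
     X xt -> Y yt -> FW_atom X Y L xt yt sx sy -> 0 <= gam <= 1 ->
     let gFW := neg_r_dot L xt yt (sx - xt) (sy - yt) in
     wgap L xs ys (xt + gam *: (sx - xt)) (yt + gam *: (sy - yt)) <=
       wgap L xs ys xt yt - nu_const 1 M (muint_e X Y L xs ys) * gam * gFW
       + gam ^+ 2 * C)
  /\
  (* (P) polytope case, SP-AFW direction *)
  (forall (A : seq 'rV[R]_n) (B : seq 'rV[R]_m),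
   X = conv_hull A -> Y = conv_hull B -> (0 < muA_e X Y L A B)%E ->
   forall xt yt (Sx : seq 'rV[R]_n) (Sy : seq 'rV[R]_m)
          (alx : 'rV[R]_n -> R) (aly : 'rV[R]_m -> R) sx sy vx vy,
     active_set A Sx alx xt -> active_set B Sy aly yt ->
     FW_atom X Y L xt yt sx sy -> away_atom L xt yt Sx Sy vx vy ->
     let gFW := neg_r_dot L xt yt (sx - xt) (sy - yt) in
     let gA := neg_r_dot L xt yt (xt - vx) (yt - vy) in
     let gPFW := neg_r_dot L xt yt (sx - xt + (xt - vx)) (sy - yt + (yt - vy)) in
     let FWstep := (gA <= gFW) in
     let dx := if FWstep then sx - xt else xt - vx in
     let dy := if FWstep then sy - yt else yt - vy in
     let gmax := if FWstep then 1%E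
                 else mine (away_ratio (alx vx)) (away_ratio (aly vy)) in
     forall gam : R, 0 <= gam -> (gam%:E <= gmax)%E ->
     wgap L xs ys (xt + gam *: dx) (yt + gam *: dy) <=
       wgap L xs ys xt yt - nu_const (1/2) M (muA_e X Y L A B) * gam * gPFW
       + gam ^+ 2 * C).
Proof.
move=> _ _ cvX cvY cX cY dL hsc hsp hCL hML C M; split.
  by move=> _ mu0 xt yt sx sy gam Xxt Yyt FW g01; apply: wgap_FW_step_le.
move=> A B eX eY mu0 xt yt Sx Sy alx aly sx sy vx vy actx acty FW AW; cbv zeta.
move=> gam g0; have [Xsx [Ysy _]] := FW; have [vxS [vyS _]] := AW.
have AX v : v \in A -> X v by rewrite eX; exact: conv_hull_mem.
have BY v : v \in B -> Y v by rewrite eY; exact: conv_hull_mem.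
have Xxt := active_set_mem cvX AX actx; have Yyt := active_set_mem cvY BY acty.
have [[_ [SxA _]] [_ [SyB _]]] := (actx, acty).
have Xvx := AX _ (SxA _ vxS); have Yvy := BY _ (SyB _ vyS).
have step :=
  wgap_PFW_step_le cvX cvY hsc hsp hCL hML dL eX eY mu0 Xxt Yyt actx acty FW AW.
case: ifP => [FWstep|/negbT AWstep].
  rewrite lee_fin => g1; have g01 : 0 <= gam <= 1 by rewrite g0 g1.
  by apply: step => //; apply: convex_setR_step.
rewrite -ltNge in AWstep; rewrite le_min => /andP[g1 g2].
apply: step => //; last exact: ltW.
  exact: away_step_mem cvX AX actx vxS g0 g1.
exact: away_step_mem cvY BY acty vyS g0 g2.
Qed.
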